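(* Let $(s,\pi)$ be a plane permutation on $[n]$ with $s=(s_0s_1\cdots s_{n-1})$, let $h=(i,j,j+1,l)$ with $i\le j<j+1\le l$ and $\{i,j,j+1,l\}\subset[n-1]$, and let $(s^h,\pi^h)=\chi_h\circ(s,\pi)$. Below, each $v^r_1,\ldots,v^r_{m_r}$ ($r\in\{i,j,l\}$, $m_r\ge 0$) denotes a (possibly empty) list of further elements. Then, according to how $s_{i-1},s_j,s_l$ lie in the cycles of $\pi$, the cycles of $\pi^h$ containing these elements are as follows: (1) if $\pi$ has cycles $(s_{i-1},v_1^i,\ldots,v_{m_i}^i)$, $(s_j,v_1^j,\ldots,v_{m_j}^j)$, $(s_l,v_1^l,\ldots,v_{m_l}^l)$, then $\pi^h$ has the cycle $(s_{i-1},v_1^j,\ldots,v_{m_j}^j,s_j,v_1^l,\ldots,v_{m_l}^l,s_l,v_1^i,\ldots,v_{m_i}^i)$; (2) if $\pi$ has the cycle $(s_{i-1},v_1^i,\ldots,v_{m_i}^i,s_l,v_1^l,\ldots,v_{m_l}^l,s_j,v_1^j,\ldots,v_{m_j}^j)$, then $\pi^h$ has cycles $(s_{i-1},v_1^j,\ldots,v_{m_j}^j)$, $(s_j,v_1^l,\ldots,v_{m_l}^l)$, $(s_l,v_1^i,\ldots,v_{m_i}^i)$; (3) if $\pi$ has the cycle $(s_{i-1},v_1^i,\ldots,v_{m_i}^i,s_j,v_1^j,\ldots,v_{m_j}^j,s_l,v_1^l,\ldots,v_{m_l}^l)$, then $\pi^h$ has the cycle $(s_{i-1},v_1^j,\ldots,v_{m_j}^j,s_l,v_1^i,\ldots,v_{m_i}^i,s_j,v_1^l,\ldots,v_{m_l}^l)$;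 (4) if $\pi$ has cycles $(s_{i-1},v_1^i,\ldots,v_{m_i}^i,s_j,v_1^j,\ldots,v_{m_j}^j)$, $(s_l,v_1^l,\ldots,v_{m_l}^l)$, then $\pi^h$ has cycles $(s_{i-1},v_1^j,\ldots,v_{m_j}^j)$, $(s_j,v_1^l,\ldots,v_{m_l}^l,s_l,v_1^i,\ldots,v_{m_i}^i)$; (5) if $\pi$ has cycles $(s_{i-1},v_1^i,\ldots,v_{m_i}^i)$, $(s_j,v_1^j,\ldots,v_{m_j}^j,s_l,v_1^l,\ldots,v_{m_l}^l)$, then $\pi^h$ has cycles $(s_{i-1},v_1^j,\ldots,v_{m_j}^j,s_l,v_1^i,\ldots,v_{m_i}^i)$, $(s_j,v_1^l,\ldots,v_{m_l}^l)$; (6) if $\pi$ has cycles $(s_{i-1},v_1^i,\ldots,v_{m_i}^i,s_l,v_1^l,\ldots,v_{m_l}^l)$, $(s_j,v_1^j,\ldots,v_{m_j}^j)$, then $\pi^h$ has cycles $(s_{i-1},v_1^j,\ldots,v_{m_j}^j,s_j,v_1^l,\ldots,v_{m_l}^l)$, $(s_l,v_1^i,\ldots,v_{m_i}^i)$.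
   Context: Permutations of $[n]=\{1,\dots,n\}$ are multiplied as composition of maps, $(\sigma\tau)(x)=\sigma(\tau(x))$. A plane permutation on $[n]$ is a pair $(s,\pi)$ where $s=(s_0s_1\cdots s_{n-1})$ is an $n$-cycle on $[n]$, written with a fixed starting element $s_0$, and $\pi$ is an arbitrary permutation of $[n]$; its diagonal is $D=s\circ\pi^{-1}$. For $h=(i,j,k,l)$ with $i\le j<k\le l$ and $\{i,j,k,l\}\subset[n-1]$, let $s^h$ be the $n$-cycle $(s_0,\dots,s_{i-1},s_k,\dots,s_l,s_{j+1},\dots,s_{k-1},s_i,\dots,s_j,s_{l+1},\dots,s_{n-1})$ obtained by interchanging the blocks $s_i\cdots s_j$ and $s_k\cdots s_l$ (when $k=j+1$ the middle block is empty, and $s^h=(s_0,\dots,s_{i-1},s_k,\dots,s_l,s_i,\dots,s_j,s_{l+1},\dots)$), and let $\pi^h=D^{-1}\circ s^h$, so that $(s^h,\pi^h)$ is a plane permutation with the same diagonal $D$. Write $(s^h,\pi^h)=\chi_h\circ(s,\pi)$; when $k=j+1$, $\chi_h$ is called a transpose. *)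

From mathcomp Require Import all_boot all_fingroup.
Set Implicit Arguments. Unset Strict Implicit. Unset Printing Implicit Defensive.

Section PlanePerm.
Variable T : finType.

(* composition of maps: (f \o g)(x) = f (g x);  note mathcomp's (g * f)%g x = f (g x) *)
Definition pcomp (f g : {perm T}) : {perm T} := (g * f)%g.

Definition is_ncycle_seq (sq : seq T) (s : {perm T}) : Prop :=
  [/\ uniq sq, size sq = #|T| & forall x, s x = next sq x].

Definition diagonal (s pi : {perm T}) : {perm T} := pcomp s pi^-1.

Definition pi_h (s pi sh : {perm T}) : {perm T} := pcomp (diagonal s pi)^-1 sh.

(* s^h for h = (i,j,k,l): interchange blocks s_i..s_j and s_k..s_l *)
Definition blockswap (sq : seq T) (i j k l : nat) : seq T :=
  take i sq ++ drop k (take l.+1 sq) ++ drop j.+1 (take k sq)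
  ++ drop i (take j.+1 sq) ++ drop l.+1 sq.

Definition has_cycles (p : {perm T}) (cs : seq (seq T)) : Prop :=
  [/\ uniq (flatten cs), all (fun c => c != [::]) cs &
      forall c, c \in cs -> forall x, x \in c -> p x = next c x].
End PlanePerm.

From mathcomp Require Import all_boot all_fingroup zify.
Set Implicit Arguments. Unset Strict Implicit. Unset Printing Implicit Defensive.

(* Swapping the adjacent blocks s_i..s_j and s_(j+1)..s_l of the cycle s only
   changes the successors of s_(i-1), s_j and s_l, and in fact s^h = s o r for the
   3-cycle r = (s_(i-1) s_j s_l).  Hence pi^h = D^-1 o s^h = pi o s^-1 o s o r = pi o r:
   pi^h leaves s_(i-1) along the pi-arc that used to leave s_j, leaves s_j along the
   arc that used to leave s_l, and s_l along the arc that used to leave s_(i-1).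
   Cutting the cycles of pi at s_(i-1), s_j, s_l into the arcs v^i, v^j, v^l and
   regluing them in this way gives the six cases. *)

Section Rot3.
Variables (T : eqType) (a b c : T).

Definition rot3 x := if x == a then b else if x == b then c else if x == c then a else x.

Lemma rot3_a : a != b -> a != c -> rot3 a = b.
Proof. by rewrite /rot3 eqxx. Qed.

Lemma rot3_b : a != b -> b != c -> rot3 b = c.
Proof. by rewrite /rot3 eq_sym eqxx => /negbTE->. Qed.

Lemma rot3_c : a != c -> b != c -> rot3 c = a.
Proof. by rewrite /rot3 eqxx ![c == _]eq_sym => /negbTE-> /negbTE->. Qed.

Lemma rot3_id x : x \notin [:: a; b; c] -> rot3 x = x.
Proof. by rewrite /rot3 !inE !negb_or => /and3P[/negbTE-> /negbTE-> /negbTE->]. Qed.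

Lemma uniq_rot3 (u v w : seq T) : uniq ([:: a; b; c] ++ u ++ v ++ w) ->
  [/\ a != b, a != c, b != c &
      [/\ {in u, rot3 =1 id}, {in v, rot3 =1 id} & {in w, rot3 =1 id}]].
Proof.
rewrite cat_uniq => /and3P[abc /hasPn uvw_notin _].
move: abc; rewrite /= !inE !negb_or => /andP[/andP[-> ->] /andP[-> _]].
have fixed t : {subset t <= u ++ v ++ w} -> {in t, rot3 =1 id}.
  by move=> sub_t x /sub_t/uvw_notin; apply: rot3_id.
by split=> //; split; apply: fixed => x xt; rewrite !mem_cat xt ?orbT.
Qed.

End Rot3.

Lemma fpath_comp_fixed (T : eqType) (p q f : T -> T) :
    (forall x, q x = p (f x)) ->
  forall (v : seq T) y, {in v, f =1 id} ->
  forall x, fpath q x (rcons v y) = fpath p (f x) (rcons v y).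
Proof.
move=> qE v y; elim: v => [|z v IHv] fv x /=; first by rewrite qE.
have fz : f z = z by apply: fv; rewrite mem_head.
by rewrite qE IHv ?fz // => u uv; apply: fv; rewrite inE uv orbT.
Qed.

Lemma rcons_cat_cons (T : Type) (v w : seq T) x y :
  rcons (v ++ y :: w) x = v ++ y :: rcons w x.
Proof. by rewrite rcons_cat. Qed.

Lemma path_cat_cons (T : eqType) (e : rel T) x v y w :
  path e x (v ++ y :: w) = path e x (rcons v y) && path e y w.
Proof. by rewrite -cat_rcons cat_path last_rcons. Qed.

Ltac perm_by_count := apply/seq.permP => e; rewrite /=; do ?rewrite count_cat /=; lia.

Ltac conj_of_conj :=
  move=> ?; repeat match goal with H : is_true (_ && _) |- _ => case/andP: H => ? ? end;
  by repeat (apply/andP; split).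

(* Cut each cycle into its arcs between the heads a, b, c and turn the q-arcs into
   p-arcs: both sides become conjunctions of the same arcs, in different orders. *)
Ltac rot3_paths qE :=
  rewrite /= ?rcons_cat_cons ?path_cat_cons !(fpath_comp_fixed qE) ?rot3_a ?rot3_b ?rot3_c //;
  conj_of_conj.

Lemma fcycle_swap_blocks (T : eqType) (p : T -> T) (B C E : seq T) a b c :
    uniq ([:: a; b; c] ++ B ++ C ++ E) ->
  fcycle p (a :: B ++ b :: C ++ c :: E) ->
  fcycle (p \o rot3 a b c) (a :: C ++ c :: B ++ b :: E).
Proof.
move=> /uniq_rot3[ab ac bc [fB fC fE]].
have qE x : (p \o rot3 a b c) x = p (rot3 a b c x) by [].
by rot3_paths qE.
Qed.

Lemma next_swap_blocks (T : eqType) (A B C D : seq T) a b c :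
    uniq (A ++ a :: B ++ b :: C ++ c :: D) ->
  forall x, next (A ++ a :: C ++ c :: B ++ b :: D) x =
            next (A ++ a :: B ++ b :: C ++ c :: D) (rot3 a b c x).
Proof.
set s := A ++ _; set s' := A ++ _ => Us x.
have Ps' : perm_eq s' s by rewrite /s /s'; perm_by_count.
have Us' : uniq s' by rewrite (perm_uniq Ps').
have [x_s' | x_s'] := boolP (x \in s'); last first.
  have x_s : x \notin s by rewrite -(perm_mem Ps').
  have x_abc : x \notin [:: a; b; c].
    by apply: contra x_s; rewrite /s !(mem_cat, inE) => /or3P[] ->; rewrite ?orbT.
  by rewrite rot3_id // !next_nth (negbTE x_s) (negbTE x_s').
have rot_s : rot (size A) s = a :: B ++ b :: C ++ c :: D ++ A.
  by rewrite /s rot_size_cat /= -!catA /= -!catA.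
have rot_s' : rot (size A) s' = a :: C ++ c :: B ++ b :: D ++ A.
  by rewrite /s' rot_size_cat /= -!catA /= -!catA.
have Ur : uniq (a :: B ++ b :: C ++ c :: D ++ A) by rewrite -rot_s rot_uniq.
have U : uniq ([:: a; b; c] ++ B ++ C ++ D ++ A).
  by rewrite -(perm_uniq (_ : perm_eq s _)) // /s; perm_by_count.
have cyc := fcycle_swap_blocks U (cycle_next Ur).
rewrite -(next_rot (size A) Us') rot_s' (nextE cyc); last by rewrite -rot_s' mem_rot.
by rewrite -(next_rot (size A) Us) rot_s.
Qed.

Lemma has_cyclesP (T : finType) (p : {perm T}) cs : has_cycles p cs <->
  [/\ uniq (flatten cs), all (fun c => c != [::]) cs & all (fcycle p) cs].
Proof.
split=> [[U N nextP] | [U N /allP cycP]].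
  split=> //; apply/allP=> c cs_c.
  apply: cycle_from_next => [|x c_x]; last by rewrite /= (nextP c).
  case/splitPr: cs_c U => cs1 cs2.
  by rewrite flatten_cat cat_uniq /= cat_uniq => /and3P[_ _ /andP[]].
by split=> // c cs_c x c_x; rewrite (nextE (cycP c cs_c) c_x).
Qed.

Section ThreeCycleSurgery.
Variables (T : finType) (p q : {perm T}) (a b c : T) (vi vj vl : seq T).
Hypothesis qE : forall x, q x = p (rot3 a b c x).

Lemma has_cycles_surgery (cs1 cs2 : seq (seq T)) :
    perm_eq (flatten cs1) ([:: a; b; c] ++ vi ++ vj ++ vl) ->
    perm_eq (flatten cs2) ([:: a; b; c] ++ vi ++ vj ++ vl) ->
    all (fun cy => cy != [::]) cs2 ->
    (a != b -> a != c -> b != c ->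
     {in vi, rot3 a b c =1 id} -> {in vj, rot3 a b c =1 id} -> {in vl, rot3 a b c =1 id} ->
     all (fcycle p) cs1 -> all (fcycle q) cs2) ->
  has_cycles p cs1 -> has_cycles q cs2.
Proof.
move=> P1 P2 N2 arcs12 /has_cyclesP[U1 _ C1]; apply/has_cyclesP.
have U : uniq ([:: a; b; c] ++ vi ++ vj ++ vl) by rewrite -(perm_uniq P1).
split=> //; first by rewrite (perm_uniq P2).
by have [ab ac bc [fi fj fl]] := uniq_rot3 U; apply: arcs12.
Qed.

Ltac surgery :=
  apply: has_cycles_surgery => [||//|];
  try perm_by_count;
  move=> ? ? ? ? ? ?; rot3_paths qE.

Lemma has_cycles_rot3 :
  (has_cycles p [:: a :: vi; b :: vj; c :: vl] ->
        has_cycles q [:: a :: vj ++ b :: vl ++ c :: vi]) /\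
  (has_cycles p [:: a :: vi ++ c :: vl ++ b :: vj] ->
        has_cycles q [:: a :: vj; b :: vl; c :: vi]) /\
  (has_cycles p [:: a :: vi ++ b :: vj ++ c :: vl] ->
        has_cycles q [:: a :: vj ++ c :: vi ++ b :: vl]) /\
  (has_cycles p [:: a :: vi ++ b :: vj; c :: vl] ->
        has_cycles q [:: a :: vj; b :: vl ++ c :: vi]) /\
  (has_cycles p [:: a :: vi; b :: vj ++ c :: vl] ->
        has_cycles q [:: a :: vj ++ c :: vi; b :: vl]) /\
  (has_cycles p [:: a :: vi ++ c :: vl; b :: vj] ->
        has_cycles q [:: a :: vj ++ b :: vl; c :: vi]).
Proof. by do 5 (split; first by surgery); surgery. Qed.

End ThreeCycleSurgery.

Lemma blockswap_adjacent (T : finType) (x0 : T) (sq : seq T) i j l :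
    0 < i -> i <= j -> j < l -> l < size sq ->
  let A := take i.-1 sq in let B := drop i (take j sq) in
  let C := drop j.+1 (take l sq) in let D := drop l.+1 sq in
  let a := nth x0 sq i.-1 in let b := nth x0 sq j in let c := nth x0 sq l in
  sq = A ++ a :: B ++ b :: C ++ c :: D /\
  blockswap sq i j j.+1 l = A ++ a :: C ++ c :: B ++ b :: D.
Proof.
move=> i_gt0 ij jl l_lt A B C D a b c.
have take_i : take i sq = rcons A a by rewrite -take_nth ?prednK //; lia.
have take_j : take j sq = take i sq ++ B.
  by rewrite -{1}(cat_take_drop i (take j sq)) take_takel.
have take_j1 : take j.+1 sq = rcons (take j sq) b by rewrite -take_nth //; lia.
have take_l : take l sq = take j.+1 sq ++ C.
  by rewrite -{1}(cat_take_drop j.+1 (take l sq)) take_takel.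
have take_l1 : take l.+1 sq = rcons (take l sq) c by rewrite -take_nth.
have size_i : size (take i sq) = i by rewrite size_takel //; lia.
have size_j1 : size (take j.+1 sq) = j.+1 by rewrite size_takel //; lia.
split.
  by rewrite -{1}(cat_take_drop l.+1 sq) take_l1 take_l take_j1 take_j take_i -!cats1 -!catA.
have drop_C : drop j.+1 (take l.+1 sq) = rcons C c.
  by rewrite take_l1 take_l rcons_cat drop_size_cat.
have drop_B : drop i (take j.+1 sq) = rcons B b.
  by rewrite take_j1 take_j rcons_cat drop_size_cat.
have drop_nil : drop j.+1 (take j.+1 sq) = [::] by rewrite -{1}size_j1 drop_size.
by rewrite /blockswap drop_C drop_nil drop_B take_i -!cats1 -!catA.
Qed.

Lemma pi_hE (T : finType) (s pi sh : {perm T}) (g : T -> T) :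
  (forall x, sh x = s (g x)) -> forall x, pi_h s pi sh x = pi (g x).
Proof.
by move=> shE x; rewrite /pi_h /pcomp /diagonal invMg invgK !permM shE permK.
Qed.

Theorem lemma2 (n : nat) (x0 : 'I_n) (sq : seq 'I_n) (s pi sh : {perm 'I_n})
    (i j l : nat) :
  is_ncycle_seq sq s ->
  1 <= i -> i <= j -> j.+1 <= l -> l <= n.-1 ->
  is_ncycle_seq (blockswap sq i j j.+1 l) sh ->
  forall vi vj vl : seq 'I_n,
  let si := nth x0 sq i.-1 in
  let sj := nth x0 sq j in
  let sl := nth x0 sq l in
  let pih := pi_h s pi sh in
  (has_cycles pi [:: si :: vi; sj :: vj; sl :: vl] ->
        has_cycles pih [:: si :: vj ++ sj :: vl ++ sl :: vi]) /\
  (has_cycles pi [:: si :: vi ++ sl :: vl ++ sj :: vj] ->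
        has_cycles pih [:: si :: vj; sj :: vl; sl :: vi]) /\
  (has_cycles pi [:: si :: vi ++ sj :: vj ++ sl :: vl] ->
        has_cycles pih [:: si :: vj ++ sl :: vi ++ sj :: vl]) /\
  (has_cycles pi [:: si :: vi ++ sj :: vj; sl :: vl] ->
        has_cycles pih [:: si :: vj; sj :: vl ++ sl :: vi]) /\
  (has_cycles pi [:: si :: vi; sj :: vj ++ sl :: vl] ->
        has_cycles pih [:: si :: vj ++ sl :: vi; sj :: vl]) /\
  (has_cycles pi [:: si :: vi ++ sl :: vl; sj :: vj] ->
        has_cycles pih [:: si :: vj ++ sj :: vl; sl :: vi]).
Proof.
move=> [Usq size_sq sE] i_gt0 ij jl l_le [_ _ shE] vi vj vl si sj sl pih.
have l_lt : l < size sq by rewrite size_sq card_ord; lia.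
have [sq_blocks swap_blocks] := blockswap_adjacent x0 i_gt0 ij jl l_lt.
apply: has_cycles_rot3; apply: pi_hE => x.
by rewrite shE swap_blocks next_swap_blocks -?sq_blocks // sE.
Qed.
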